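(* Let $H$ be a Hopf algebra with $S^2=\mathrm{id}$ and let $\tau$ be a Hopf automorphism of $H$ of finite order. Then $\exp_{\tau^{-1}}(H)=\exp_\tau(H)$ (in particular one exists if and only if the other does).
   Context: For a Hopf automorphism $\tau$ of $H$ of finite order and $n$ a multiple of that order, $h^{[n,\tau]}=\sum h_1(\tau\cdot h_2)(\tau^2\cdot h_3)\cdots(\tau^{n-1}\cdot h_n)$ (Sweedler notation). $\exp_\tau(H)$ is the smallest positive integer $n$, if it exists, that is a multiple of the order of $\tau$ and satisfies $h^{[n,\tau]}=\varepsilon(h)1$ for all $h\in H$. *)

(* Hopf algebras over a field k, encoded with explicit
   Sweedler representations of the coproduct; equalities in H (x) H and
   H (x) H (x) H are tested through the universal property of the tensor
   product (all bilinear / trilinear maps into arbitrary k-modules). *)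
From HB Require Import structures.
From mathcomp Require Import all_boot all_order all_algebra.
Set Implicit Arguments. Unset Strict Implicit. Unset Printing Implicit Defensive.
Import Order.TTheory GRing.Theory Num.Theory.
Local Open Scope ring_scope.

Section Hopf.
Variables (k : fieldType) (H : algType k).

(* An element of H (x) H is represented by a finite list of pairs
   [(a_i, b_i)] standing for sum_i a_i (x) b_i. *)
Definition bilin (M : lmodType k) (f : H -> H -> M) : Prop :=
  (forall (a : k) x y z, f (a *: x + y) z = a *: f x z + f y z) /\
  (forall (a : k) x y z, f z (a *: x + y) = a *: f z x + f z y).

Definition trilin (M : lmodType k) (g : H -> H -> H -> M) : Prop :=
  (forall (a : k) x y u v, g (a *: x + y) u v = a *: g x u v + g y u v) /\
  (forall (a : k) x y u v, g u (a *: x + y) v = a *: g u x v + g u y v) /\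
  (forall (a : k) x y u v, g u v (a *: x + y) = a *: g u v x + g u v y).

Definition teq2 (s t : seq (H * H)) : Prop :=
  forall (M : lmodType k) (f : H -> H -> M), bilin f ->
    \sum_(p <- s) f p.1 p.2 = \sum_(p <- t) f p.1 p.2.

Definition coassoc (D : H -> seq (H * H)) : Prop :=
  forall h (M : lmodType k) (g : H -> H -> H -> M), trilin g ->
    \sum_(p <- D h) \sum_(q <- D p.1) g q.1 q.2 p.2
    = \sum_(p <- D h) \sum_(q <- D p.2) g p.1 q.1 q.2.

Record is_hopf (D : H -> seq (H * H)) (eps : H -> k) (S : H -> H) : Prop := {
  D_linear : forall (a : k) x y,
     teq2 (D (a *: x + y)) ([seq (a *: p.1, p.2) | p <- D x] ++ D y);
  D_coassoc : coassoc D;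
  eps_linear : forall (a : k) x y, eps (a *: x + y) = a * eps x + eps y;
  eps_counit_l : forall h, \sum_(p <- D h) eps p.1 *: p.2 = h;
  eps_counit_r : forall h, \sum_(p <- D h) eps p.2 *: p.1 = h;
  D_mul : forall x y,
     teq2 (D (x * y)) [seq (p.1 * q.1, p.2 * q.2) | p <- D x, q <- D y];
  D_one : teq2 (D 1) [:: (1, 1)];
  eps_mul : forall x y, eps (x * y) = eps x * eps y;
  eps_one : eps 1 = 1;
  S_linear : forall (a : k) x y, S (a *: x + y) = a *: S x + S y;
  S_antipode_l : forall h, \sum_(p <- D h) S p.1 * p.2 = eps h *: 1;
  S_antipode_r : forall h, \sum_(p <- D h) p.1 * S p.2 = eps h *: 1
}.

(* tau is a Hopf algebra automorphism (bijective bialgebra endomorphism;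
   compatibility with S is then automatic). *)
Record is_hopf_aut (D : H -> seq (H * H)) (eps : H -> k) (tau : H -> H) : Prop := {
  tau_linear : forall (a : k) x y, tau (a *: x + y) = a *: tau x + tau y;
  tau_mul : forall x y, tau (x * y) = tau x * tau y;
  tau_one : tau 1 = 1;
  tau_bij : bijective tau;
  tau_D : forall h, teq2 (D (tau h)) [seq (tau p.1, tau p.2) | p <- D h];
  tau_eps : forall h, eps (tau h) = eps h
}.

Definition is_order (tau : H -> H) (m : nat) : Prop :=
  (0 < m)%N /\ (forall h, iter m tau h = h) /\
  (forall j, (0 < j < m)%N -> exists h, iter j tau h <> h).

(* Sweedler representation of the n-fold coproduct Delta^(n-1) h
   = sum h_1 (x) ... (x) h_n, as lists of length n, defined by
   Delta^(n) = (id (x) Delta^(n-1)) o Delta. *)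
Fixpoint sweedler (D : H -> seq (H * H)) (n : nat) (h : H) : seq (seq H) :=
  match n with
  | 0 => [:: [::]]
  | 1 => [:: [:: h]]
  | n'.+1 => flatten [seq [seq p.1 :: t | t <- sweedler D n' p.2] | p <- D h]
  end.

Definition twisted_power (D : H -> seq (H * H)) (tau : H -> H) (n : nat) (h : H) : H :=
  \sum_(t <- sweedler D n h) \prod_(i < n) iter i tau (nth 0 t i).

Definition exp_cond (D : H -> seq (H * H)) (eps : H -> k) (tau : H -> H) (n : nat) : Prop :=
  (0 < n)%N /\ (exists m, is_order tau m /\ (m %| n)%N) /\
  (forall h, twisted_power D tau n h = eps h *: 1).

Definition is_exp (D : H -> seq (H * H)) (eps : H -> k) (tau : H -> H) (n : nat) : Prop :=
  exp_cond D eps tau n /\ (forall m, (0 < m < n)%N -> ~ exp_cond D eps tau m).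

End Hopf.

(* In the convolution algebra End(H), [h^[n,sigma]] is the product
   [id * sigma * ... * sigma^(n-1)].  Conjugation by the antipode reverses
   convolution products, since [S] is an anti-algebra and anti-coalgebra map;
   as [S^2 = id] and each [tau^i] commutes with [S], it turns
   [id * tau * ... * tau^(n-1) = 1] into [tau^(n-1) * ... * tau * id = 1].
   Composing with the algebra map [tau] and using [tau^n = id] gives
   [id * tau^-1 * ... * tau^-(n-1) = 1].  So the admissible [n] for [tau]
   and [tau^-1] coincide, and hence so do their minima. *)

From HB Require Import structures.
From mathcomp Require Import all_boot all_order all_algebra.
From Stdlib Require Import FunctionalExtensionality.
Set Implicit Arguments. Unset Strict Implicit. Unset Printing Implicit Defensive.
Import GRing.Theory.
Local Open Scope ring_scope.

Section LinearMaps.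
Variables (R : pzRingType) (M N : lmodType R).
Implicit Types phi : M -> N.

Lemma lin0 phi : linear phi -> phi 0 = 0.
Proof.
move=> hphi; apply: (@addrI _ (phi 0)); rewrite addr0.
by have := hphi 1 0 0; rewrite scaler0 addr0 scale1r => <-.
Qed.

Lemma linZ phi a x : linear phi -> phi (a *: x) = a *: phi x.
Proof. by move=> hphi; rewrite -[a *: x]addr0 hphi lin0 // addr0. Qed.

Lemma linD phi x y : linear phi -> phi (x + y) = phi x + phi y.
Proof. by move=> hphi; rewrite -[x]scale1r hphi !scale1r. Qed.

Lemma lin_sum phi (I : Type) (s : seq I) (F : I -> M) : linear phi ->
  phi (\sum_(i <- s) F i) = \sum_(i <- s) phi (F i).
Proof.
move=> hphi; elim: s => [|i s IH]; first by rewrite !big_nil lin0.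
by rewrite !big_cons linD // IH.
Qed.

End LinearMaps.

Lemma iter_can (T : Type) (f g : T -> T) i : cancel f g -> cancel (iter i f) (iter i g).
Proof. by move=> fK; elim: i => [|i IH] x //; rewrite iterSr iterS fK IH. Qed.

Section Bilinear.
Variables (k : fieldType) (H : algType k) (M : lmodType k) (f : H -> H -> M).
Hypothesis hf : bilin f.

Lemma bilin_linl y : linear (f^~ y).
Proof. by move=> a x z; rewrite hf.1. Qed.

Lemma bilin_linr x : linear (f x).
Proof. by move=> a y z; rewrite hf.2. Qed.

Lemma bilinZl a x y : f (a *: x) y = a *: f x y.
Proof. exact: (linZ _ _ (bilin_linl y)). Qed.

End Bilinear.

Lemma bilin_mul (k : fieldType) (H : algType k) (g1 g2 : H -> H) :
  linear g1 -> linear g2 -> bilin (fun x y => g1 x * g2 y).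
Proof.
move=> h1 h2; split=> a x y z /=; first by rewrite h1 mulrDl scalerAl.
by rewrite h2 mulrDr scalerAr.
Qed.

Section HopfAlgebra.
Variables (k : fieldType) (H : algType k).
Variables (D : H -> seq (H * H)) (eps : H -> k) (S : H -> H).
Hypothesis hH : is_hopf D eps S.

Lemma counit_linear : linear (eps : H -> k^o).
Proof. exact: (eps_linear hH). Qed.

Lemma counitZ a x : eps (a *: x) = a * eps x.
Proof. exact: (linZ _ _ counit_linear). Qed.

Lemma antipode_linear : linear S.
Proof. exact: (S_linear hH). Qed.

Lemma coproduct_linear (M : lmodType k) (f : H -> H -> M) :
  bilin f -> linear (fun x => \sum_(p <- D x) f p.1 p.2).
Proof.
move=> hf a x y; rewrite (D_linear hH a x y hf) big_cat big_map scaler_sumr.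
by congr (_ + _); apply: eq_bigr => p _; rewrite bilinZl.
Qed.

Lemma coassoc_lin (M : lmodType k) (g : H -> H -> H -> M) h :
  (forall v w, linear (fun x => g x v w)) -> (forall u w, linear (fun x => g u x w)) ->
  (forall u v, linear (g u v)) ->
  \sum_(p <- D h) \sum_(q <- D p.1) g q.1 q.2 p.2
    = \sum_(p <- D h) \sum_(q <- D p.2) g p.1 q.1 q.2.
Proof.
move=> h1 h2 h3; apply: (D_coassoc hH); split; last split.
- by move=> a x y u v; apply: h1.
- by move=> a x y u v; apply: h2.
- by move=> a x y u v; apply: h3.
Qed.

Lemma counit_sum_l (M : lmodType k) (phi : H -> M) h : linear phi ->
  \sum_(p <- D h) eps p.1 *: phi p.2 = phi h.
Proof.
move=> hphi; rewrite -{2}(eps_counit_l hH h) lin_sum //.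
by apply: eq_bigr => p _; rewrite linZ.
Qed.

Lemma counit_sum_r (M : lmodType k) (phi : H -> M) h : linear phi ->
  \sum_(p <- D h) eps p.2 *: phi p.1 = phi h.
Proof.
move=> hphi; rewrite -{2}(eps_counit_r hH h) lin_sum //.
by apply: eq_bigr => p _; rewrite linZ.
Qed.

Lemma antipode1 : S 1 = 1.
Proof.
have hb : bilin (fun x y : H => S x * y) := bilin_mul antipode_linear (fun _ _ _ => erefl).
have := S_antipode_l hH 1; rewrite (eps_one hH) scale1r.
by rewrite (D_one hH hb) big_seq1 mulr1.
Qed.

Lemma counit_antipode h : eps (S h) = eps h.
Proof.
have := congr1 eps (S_antipode_l hH h).
rewrite counitZ (eps_one hH) mulr1 => <-.
rewrite -{1}(eps_counit_r hH h) (lin_sum _ _ antipode_linear) !(lin_sum _ _ counit_linear).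
by apply: eq_bigr => p _; rewrite (eps_mul hH) (linZ _ _ antipode_linear) counitZ mulrC.
Qed.

Definition conv (f g : H -> H) h := \sum_(p <- D h) f p.1 * g p.2.
Definition conv1 h := eps h *: (1 : H).

Lemma conv1_linear : linear conv1.
Proof. by move=> a x y; rewrite /conv1 (eps_linear hH) scalerDl scalerA. Qed.

Lemma conv_linear f g : linear f -> linear g -> linear (conv f g).
Proof. by move=> hf hg; apply: (coproduct_linear (bilin_mul hf hg)). Qed.

Lemma eq_conv f f' g g' : f =1 f' -> g =1 g' -> conv f g =1 conv f' g'.
Proof. by move=> ef eg h; apply: eq_bigr => p _; rewrite ef eg. Qed.

Lemma conv1r f : linear f -> conv f conv1 =1 f.
Proof.
move=> hf h; rewrite /conv /conv1 -(counit_sum_r h hf).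
by apply: eq_bigr => p _; rewrite -scalerAr mulr1.
Qed.

Lemma conv1l f : linear f -> conv conv1 f =1 f.
Proof.
move=> hf h; rewrite /conv /conv1 -(counit_sum_l h hf).
by apply: eq_bigr => p _; rewrite -scalerAl mul1r.
Qed.

Lemma convA f g l : linear f -> linear g -> linear l ->
  conv (conv f g) l =1 conv f (conv g l).
Proof.
move=> hf hg hl h; rewrite /conv.
transitivity (\sum_(p <- D h) \sum_(q <- D p.1) f q.1 * g q.2 * l p.2).
  by apply: eq_bigr => p _; rewrite mulr_suml.
rewrite (@coassoc_lin H (fun a b c => f a * g b * l c) h).
- by apply: eq_bigr => p _; rewrite mulr_sumr; apply: eq_bigr => q _; rewrite mulrA.
- by move=> v w a x y /=; rewrite hf !mulrDl !scalerAl.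
- by move=> v w a x y /=; rewrite hg mulrDr mulrDl scalerAl scalerAr.
- by move=> v w a x y /=; rewrite hl mulrDr scalerAr.
Qed.

Definition bconv (A B : H -> H -> H) x y :=
  \sum_(p <- D x) \sum_(q <- D y) A p.1 q.1 * B p.2 q.2.
Definition bconv1 x y := (eps x * eps y) *: (1 : H).

Lemma eq_bconv A A' B B' x y : (forall a b, A a b = A' a b) ->
  (forall a b, B a b = B' a b) -> bconv A B x y = bconv A' B' x y.
Proof.
by move=> eA eB; apply: eq_bigr => p _; apply: eq_bigr => q _; rewrite eA eB.
Qed.

Lemma bconv1r A x y : bilin A -> bconv A bconv1 x y = A x y.
Proof.
move=> hA; rewrite /bconv /bconv1 -(counit_sum_r x (bilin_linl hA y)).
apply: eq_bigr => p _; rewrite -(counit_sum_r y (bilin_linr hA p.1)) scaler_sumr.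
by apply: eq_bigr => q _; rewrite -scalerAr mulr1 scalerA mulrC.
Qed.

Lemma bconv1l B x y : bilin B -> bconv bconv1 B x y = B x y.
Proof.
move=> hB; rewrite /bconv /bconv1 -(counit_sum_l x (bilin_linl hB y)).
apply: eq_bigr => p _; rewrite -(counit_sum_l y (bilin_linr hB p.2)) scaler_sumr.
by apply: eq_bigr => q _; rewrite -scalerAl mul1r scalerA mulrC.
Qed.

Lemma bconvA A B C x y : bilin A -> bilin B -> bilin C ->
  bconv (bconv A B) C x y = bconv A (bconv B C) x y.
Proof.
move=> hA hB hC; rewrite /bconv.
pose Phi a b c := \sum_(q <- D y) \sum_(q' <- D q.1) A a q'.1 * B b q'.2 * C c q.2.
transitivity (\sum_(p <- D x) \sum_(p' <- D p.1) Phi p'.1 p'.2 p.2).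
  apply: eq_bigr => p _; under eq_bigr => q _ do rewrite mulr_suml.
  rewrite exchange_big; apply: eq_bigr => p' _; apply: eq_bigr => q _.
  by rewrite mulr_suml.
rewrite (@coassoc_lin H Phi x).
- apply: eq_bigr => p _; under [RHS]eq_bigr => q _ do rewrite mulr_sumr.
  rewrite [RHS]exchange_big; apply: eq_bigr => p' _.
  rewrite /Phi (@coassoc_lin H (fun u v w => A p.1 u * B p'.1 v * C p'.2 w) y).
  + apply: eq_bigr => q _; rewrite mulr_sumr; apply: eq_bigr => q' _.
    by rewrite mulrA.
  + by move=> v w s a1 a2 /=; rewrite hA.2 !mulrDl !scalerAl.
  + by move=> v w s a1 a2 /=; rewrite hB.2 mulrDr mulrDl scalerAl scalerAr.
  + by move=> v w s a1 a2 /=; rewrite hC.2 mulrDr scalerAr.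
- move=> b c s a1 a2 /=; rewrite scaler_sumr -big_split; apply: eq_bigr => q _.
  rewrite scaler_sumr -big_split; apply: eq_bigr => q' _ /=.
  by rewrite hA.1 !mulrDl !scalerAl.
- move=> b c s a1 a2 /=; rewrite scaler_sumr -big_split; apply: eq_bigr => q _.
  rewrite scaler_sumr -big_split; apply: eq_bigr => q' _ /=.
  by rewrite hB.1 mulrDr mulrDl scalerAl scalerAr.
- move=> b c s a1 a2 /=; rewrite scaler_sumr -big_split; apply: eq_bigr => q _.
  rewrite scaler_sumr -big_split; apply: eq_bigr => q' _ /=.
  by rewrite hC.1 mulrDr scalerAr.
Qed.

(* [S \o m] and [m \o (S (x) S) \o flip] are both convolution inverses of [m]. *)
Lemma antipodeM x y : S (x * y) = S y * S x.
Proof.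
pose A a b := S (a * b); pose Mu (a b : H) := a * b; pose B a b := S b * S a.
have hlS := antipode_linear.
have hA : bilin A.
  by split=> s a1 a2 z; rewrite /A ?mulrDl ?mulrDr -?scalerAl -?scalerAr hlS.
have hM : bilin Mu by split=> s a1 a2 z; rewrite /Mu ?mulrDl ?mulrDr -?scalerAl -?scalerAr.
have hB : bilin B.
  by split=> s a1 a2 z; rewrite /B hlS ?mulrDl ?mulrDr -?scalerAl -?scalerAr.
have inv_l a b : bconv A Mu a b = bconv1 a b.
  have hb : bilin (fun c d : H => S c * d) := bilin_mul hlS (fun _ _ _ => erefl).
  have := D_mul hH a b hb; rewrite big_allpairs_dep /= (S_antipode_l hH) (eps_mul hH).
  by rewrite /bconv /bconv1 /A /Mu => <-.
have inv_r a b : bconv Mu B a b = bconv1 a b.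
  rewrite /bconv /bconv1 /B /Mu.
  transitivity (\sum_(p <- D a) p.1 * (eps b *: 1) * S p.2).
    apply: eq_bigr => p _; rewrite -(S_antipode_r hH b) mulr_sumr mulr_suml.
    by apply: eq_bigr => q _; rewrite !mulrA.
  under eq_bigr => p _ do rewrite -scalerAr mulr1 -scalerAl.
  by rewrite -scaler_sumr (S_antipode_r hH) scalerA mulrC.
rewrite -[S (x * y)]/(A x y) -(bconv1r x y hA) -(eq_bconv x y (fun _ _ => erefl) inv_r).
by rewrite -bconvA // (eq_bconv x y inv_l (fun _ _ => erefl)) bconv1l.
Qed.

Lemma antipode_sum_r (M : lmodType k) (phi : H -> M) h : linear phi ->
  \sum_(p <- D h) phi (p.1 * S p.2) = eps h *: phi 1.
Proof. by move=> hphi; rewrite -lin_sum // (S_antipode_r hH) linZ. Qed.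

Lemma antipode_sum_l (M : lmodType k) (phi : H -> M) h : linear phi ->
  \sum_(p <- D h) phi (S p.1 * p.2) = eps h *: phi 1.
Proof. by move=> hphi; rewrite -lin_sum // (S_antipode_l hH) linZ. Qed.

Section AntipodeCoproduct.
Variables (M : lmodType k) (f : H -> H -> M).
Hypothesis hf : bilin f.

Local Ltac expand :=
  rewrite ?antipode_linear ?(mulrDl, mulrDr) -?(scalerAl, scalerAr) ?hf.1 ?hf.2.
Local Ltac sum_expand :=
  repeat (rewrite scaler_sumr -big_split; apply: eq_bigr => ? _ /=); expand.

(* Contracting [Kf] in its last two arguments, or in its first two after
   applying [S] to the first, gives the two sides of [coproduct_antipode]. *)
Definition Kf x y z := \sum_(a <- D x) \sum_(b <- D y) \sum_(c <- D z)
  f (a.1 * b.1 * S c.2) (a.2 * b.2 * S c.1).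

Definition flip_antipode z := \sum_(c <- D z) f (S c.2) (S c.1).

Lemma Kf_linear1 y z : linear (fun x => Kf x y z).
Proof.
have hb : bilin (fun a1 a2 => \sum_(b <- D y) \sum_(c <- D z)
                                 f (a1 * b.1 * S c.2) (a2 * b.2 * S c.1)).
  by split=> s x x' w /=; sum_expand.
exact: coproduct_linear hb.
Qed.

Lemma Kf_linear2 x z : linear (fun y => Kf x y z).
Proof.
move=> s y y' /=; rewrite /Kf scaler_sumr -big_split; apply: eq_bigr => a _ /=.
have hb : bilin (fun b1 b2 => \sum_(c <- D z) f (a.1 * b1 * S c.2) (a.2 * b2 * S c.1)).
  by split=> s' b b' w /=; sum_expand.
exact: (coproduct_linear hb s y y').
Qed.

Lemma Kf_linear3 x y : linear (Kf x y).
Proof.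
move=> s z z' /=; rewrite /Kf scaler_sumr -big_split; apply: eq_bigr => a _ /=.
rewrite scaler_sumr -big_split; apply: eq_bigr => b _ /=.
have hb : bilin (fun c1 c2 => f (a.1 * b.1 * S c2) (a.2 * b.2 * S c1)).
  by split=> s' c c' w /=; expand.
exact: (coproduct_linear hb s z z').
Qed.

Lemma flip_antipode_linear : linear flip_antipode.
Proof.
have hb : bilin (fun c1 c2 => f (S c2) (S c1)) by split=> a x y w /=; expand.
exact: coproduct_linear hb.
Qed.

Lemma Kf_contract_inner u1 u2 v :
  \sum_(q <- D v) \sum_(b <- D q.1) \sum_(c <- D q.2)
     f (u1 * b.1 * S c.2) (u2 * b.2 * S c.1) = eps v *: f u1 u2.
Proof.
pose F b1 b2 c1 c2 := f (u1 * b1 * S c2) (u2 * b2 * S c1).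
pose g x1 x2 x3 := \sum_(b <- D x1) F b.1 b.2 x2 x3.
transitivity (\sum_(q <- D v) \sum_(c <- D q.2) g q.1 c.1 c.2).
  by apply: eq_bigr => q _; rewrite /g exchange_big.
rewrite -(@coassoc_lin M g v); first last.
- by move=> x1 x2 s y y' /=; rewrite /g /F; sum_expand.
- by move=> x1 x2 s y y' /=; rewrite /g /F; sum_expand.
- move=> x2 x3.
  have hb : bilin (fun b1 b2 => F b1 b2 x2 x3) by split=> s y y' w; rewrite /F /=; expand.
  exact: coproduct_linear hb.
transitivity (\sum_(q <- D v) \sum_(c <- D q.1) \sum_(b <- D c.2) F c.1 b.1 b.2 q.2).
  apply: eq_bigr => q _; apply: (@coassoc_lin M (fun x1 x2 x3 => F x1 x2 x3 q.2) q.1).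
  - by move=> x1 x2 s y y' /=; rewrite /F; expand.
  - by move=> x1 x2 s y y' /=; rewrite /F; expand.
  - by move=> x1 x2 s y y' /=; rewrite /F; expand.
transitivity (\sum_(q <- D v) f (u1 * q.1 * S q.2) u2).
  apply: eq_bigr => q _.
  have hl : linear (fun w => f (u1 * w * S q.2) u2) by move=> s y y' /=; expand.
  have /= <- := counit_sum_r q.1 hl; apply: eq_bigr => c _.
  have hr : linear (fun w => f (u1 * c.1 * S q.2) (u2 * w)) by move=> s y y' /=; expand.
  under eq_bigr => b _ do rewrite /F -[u2 * _ * _]mulrA.
  by have /= -> := antipode_sum_r c.2 hr; rewrite mulr1.
have hl : linear (fun w => f (u1 * w) u2) by move=> s y y' /=; expand.
under eq_bigr => q _ do rewrite -mulrA.
by have /= -> := antipode_sum_r v hl; rewrite mulr1.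
Qed.

Lemma Kf_contract_r x v :
  \sum_(q <- D v) Kf x q.1 q.2 = eps v *: \sum_(a <- D x) f a.1 a.2.
Proof.
rewrite /Kf exchange_big scaler_sumr; apply: eq_bigr => a _ /=.
exact: Kf_contract_inner.
Qed.

Lemma Kf_contract_l w z :
  \sum_(q <- D w) Kf (S q.1) q.2 z = eps w *: flip_antipode z.
Proof.
pose f' x y := \sum_(c <- D z) f (x * S c.2) (y * S c.1).
have hf' : bilin f' by split=> s x y t /=; rewrite /f'; sum_expand.
have E (q : H * H) : Kf (S q.1) q.2 z = \sum_(r <- D (S q.1 * q.2)) f' r.1 r.2.
  by rewrite (D_mul hH (S q.1) q.2 hf') big_allpairs_dep.
rewrite (eq_bigr _ (fun q _ => E q)) (antipode_sum_l _ (coproduct_linear hf')).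
rewrite (D_one hH hf') big_seq1 /f' /flip_antipode /=.
by congr (_ *: _); apply: eq_bigr => c _; rewrite !mul1r.
Qed.

Lemma coproduct_antipode h :
  \sum_(p <- D (S h)) f p.1 p.2 = \sum_(p <- D h) f (S p.2) (S p.1).
Proof.
have hE : linear (fun x => \sum_(p <- D (S x)) f p.1 p.2).
  by move=> s x x' /=; rewrite antipode_linear (coproduct_linear hf).
rewrite -(counit_sum_r h hE) /=.
under eq_bigr => p _ do rewrite -Kf_contract_r.
rewrite -(@coassoc_lin M (fun a b c => Kf (S a) b c) h).
- rewrite (eq_bigr _ (fun p _ => Kf_contract_l p.1 p.2)).
  exact: (counit_sum_l h flip_antipode_linear).
- by move=> v w s y y' /=; rewrite antipode_linear (Kf_linear1 v w).
- by move=> v w s y y' /=; rewrite (Kf_linear2 (S v) w).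
- by move=> v w s y y' /=; rewrite (Kf_linear3 (S v) w).
Qed.

End AntipodeCoproduct.

Fixpoint all_linear (fs : seq (H -> H)) : Prop :=
  if fs is f :: fs' then linear f /\ all_linear fs' else True.

Definition cprod (fs : seq (H -> H)) : H -> H := foldr conv conv1 fs.

Lemma cprod_linear fs : all_linear fs -> linear (cprod fs).
Proof.
elim: fs => [_|f fs IH [hf hfs]] /=; first exact: conv1_linear.
exact: conv_linear hf (IH hfs).
Qed.

Lemma all_linear_cat fs gs : all_linear fs -> all_linear gs -> all_linear (fs ++ gs).
Proof. by elim: fs => [|f fs IH] //= [hf hfs] hgs; split => //; apply: IH. Qed.

Lemma all_linear_rev fs : all_linear fs -> all_linear (rev fs).
Proof.
elim: fs => [|f fs IH] //= [hf hfs].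
by rewrite rev_cons -cats1; apply: all_linear_cat => //; apply: IH.
Qed.

Lemma all_linear_map (F : (H -> H) -> H -> H) fs :
  (forall f, linear f -> linear (F f)) -> all_linear fs -> all_linear (map F fs).
Proof.
by move=> hF; elim: fs => [|f fs IH] //= [hf hfs]; split; [apply: hF | apply: IH].
Qed.

Lemma cprod_cat fs gs : all_linear fs -> all_linear gs ->
  cprod (fs ++ gs) =1 conv (cprod fs) (cprod gs).
Proof.
elim: fs => [_ hgs h|f fs IH [hf hfs] hgs h] /=.
  by rewrite conv1l //; apply: cprod_linear.
rewrite (eq_conv (frefl f) (IH hfs hgs)) convA //; exact: cprod_linear.
Qed.

Lemma cprod_rcons fs g : all_linear fs -> linear g ->
  cprod (rcons fs g) =1 conv (cprod fs) g.
Proof.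
move=> hfs hg h; rewrite -cats1 cprod_cat //=.
by apply: eq_conv => // x; rewrite conv1r.
Qed.

Definition Sconj (f : H -> H) x := S (f (S x)).

Lemma Sconj_linear f : linear f -> linear (Sconj f).
Proof. by move=> hf a x y; rewrite /Sconj antipode_linear hf antipode_linear. Qed.

Lemma antipode_conv f g h : linear f -> linear g ->
  S (conv f g (S h)) = conv (Sconj g) (Sconj f) h.
Proof.
move=> hf hg; rewrite /conv (lin_sum _ _ antipode_linear).
under eq_bigr => p _ do rewrite antipodeM.
have hb : bilin (fun a b => S (g b) * S (f a)).
  split=> s x y z /=; first by rewrite hf antipode_linear mulrDr scalerAr.
  by rewrite hg antipode_linear mulrDl scalerAl.
exact: (coproduct_antipode hb h).
Qed.

Lemma antipode_cprod fs h : all_linear fs ->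
  S (cprod fs (S h)) = cprod (rev (map Sconj fs)) h.
Proof.
elim: fs h => [|f fs IH] h /=.
  by rewrite /conv1 (linZ _ _ antipode_linear) counit_antipode antipode1.
case=> hf hfs; rewrite antipode_conv //; last exact: cprod_linear.
rewrite rev_cons cprod_rcons; last exact: Sconj_linear.
- by apply: eq_conv => // x; rewrite /Sconj IH.
- by apply: all_linear_rev; apply: all_linear_map => //; exact: Sconj_linear.
Qed.

Lemma sweedler_cprod n fs h : size fs = n.+1 -> all_linear fs ->
  \sum_(t <- sweedler D n.+1 h) \prod_(i < n.+1) nth id fs i (nth 0 t i) = cprod fs h.
Proof.
elim: n fs h => [|n IH] [|f fs] // h.
  by case: fs => // _ [hf _] /=; rewrite big_seq1 big_ord1 conv1r.
move=> [sz] [hf hfs].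
rewrite [sweedler _ _ _]/= big_flatten big_map /= /conv; apply: eq_bigr => p _.
rewrite big_map; under eq_bigr => t _ do rewrite big_ord_recl /=.
by rewrite -mulr_sumr -IH.
Qed.

Definition iters (sg : H -> H) n := mkseq (fun i => iter i sg) n.

Lemma iter_linear (sg : H -> H) i : linear sg -> linear (iter i sg).
Proof. by move=> hsg; elim: i => [|i IH] a x y //=; rewrite IH hsg. Qed.

Lemma all_linear_iters sg n : linear sg -> all_linear (iters sg n).
Proof.
move=> hsg; rewrite /iters /mkseq.
by elim: (iota 0 n) => [|i s IH] //=; split=> //; apply: iter_linear.
Qed.

Lemma twisted_power_cprod sg n h : linear sg ->
  twisted_power D sg n.+1 h = cprod (iters sg n.+1) h.
Proof.
move=> hsg; rewrite /twisted_power -(sweedler_cprod h (size_mkseq _ _)).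
  by apply: eq_bigr => t _; apply: eq_bigr => i _; rewrite nth_mkseq.
exact: (all_linear_iters n.+1 hsg).
Qed.

Section Automorphism.
Variable tau : H -> H.
Hypothesis htau : is_hopf_aut D eps tau.

Lemma aut_linear : linear tau.
Proof. exact: (tau_linear htau). Qed.

(* [tau \o S] and [S \o tau] are a left and a right convolution inverse of [tau]. *)
Lemma aut_antipode h : tau (S h) = S (tau h).
Proof.
pose A x := tau (S x); pose B x := S (tau x).
have hA : linear A by move=> a x y; rewrite /A antipode_linear aut_linear.
have hB : linear B by move=> a x y; rewrite /B aut_linear antipode_linear.
have inv_l x : conv A tau x = conv1 x.
  rewrite /conv /A; under eq_bigr => p _ do rewrite -(tau_mul htau).
  by rewrite -lin_sum ?(S_antipode_l hH) ?linZ ?(tau_one htau) //; exact: aut_linear.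
have inv_r x : conv tau B x = conv1 x.
  have hb : bilin (fun a b : H => a * S b) :=
    bilin_mul (fun _ _ _ => erefl) antipode_linear.
  have := tau_D htau x hb.
  by rewrite big_map (S_antipode_r hH) (tau_eps htau) /conv /conv1 /B => ->.
rewrite -[tau (S h)]/(A h) -(conv1r hA h) -(eq_conv (frefl A) inv_r h).
by rewrite -convA //; [rewrite (eq_conv inv_l (frefl B)) conv1l | exact: aut_linear].
Qed.

Lemma aut_cprod fs h : tau (cprod fs h) = cprod (map (fun f x => tau (f x)) fs) h.
Proof.
elim: fs h => [|f fs IH] h /=; first by rewrite /conv1 (linZ _ _ aut_linear) (tau_one htau).
rewrite /conv (lin_sum _ _ aut_linear); apply: eq_bigr => p _.
by rewrite (tau_mul htau) IH.
Qed.

Hypothesis hS2 : involutive S.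

Lemma map_Sconj_iters n : map Sconj (iters tau n) = iters tau n.
Proof.
rewrite /iters /mkseq -map_comp; apply: eq_map => i /=.
apply: functional_extensionality => x; rewrite /Sconj.
suff -> : iter i tau (S x) = S (iter i tau x) by rewrite hS2.
by elim: i => [|i IH] //=; rewrite IH aut_antipode.
Qed.

Variable tauinv : H -> H.
Hypotheses (hl : cancel tau tauinv) (hr : cancel tauinv tau).

Lemma inv_linear : linear tauinv.
Proof. by move=> a x y; apply: (can_inj hl); rewrite aut_linear !hr. Qed.

(* Since [tau ^ n.+1 = id], [tau \o tau ^ (n - i) = tauinv ^ i]. *)
Lemma rev_iters_aut n : (forall h, iter n.+1 tau h = h) ->
  map (fun f x => tau (f x)) (rev (iters tau n.+1)) = iters tauinv n.+1.
Proof.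
move=> hn; apply: (@eq_from_nth _ id); first by rewrite size_map size_rev !size_mkseq.
rewrite size_map size_rev size_mkseq => i hi.
rewrite (nth_map id) ?size_rev ?size_mkseq // nth_rev ?size_mkseq //.
rewrite !nth_mkseq ?subSS ?ltnS ?leq_subr //.
apply: functional_extensionality => y; rewrite -iterS -subSn -1?ltnS //.
by rewrite -{1}[y](iter_can i hr) -iterD subnK ?hn // ltnW.
Qed.

Lemma twisted_power_inv n : (0 < n)%N -> (forall h, iter n tau h = h) ->
  (forall h, twisted_power D tau n h = eps h *: 1) ->
  forall h, twisted_power D tauinv n h = eps h *: 1.
Proof.
case: n => [//|n] _ hn htp h.
have hlin := all_linear_iters n.+1 aut_linear.
rewrite (twisted_power_cprod _ _ inv_linear) -rev_iters_aut // -aut_cprod.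
rewrite -map_Sconj_iters -antipode_cprod // -(twisted_power_cprod _ _ aut_linear).
by rewrite htp (linZ _ _ antipode_linear) antipode1 counit_antipode
  (linZ _ _ aut_linear) (tau_one htau).
Qed.

Lemma inv_is_hopf_aut : is_hopf_aut D eps tauinv.
Proof.
split.
- exact: inv_linear.
- by move=> x y; apply: (can_inj hl); rewrite (tau_mul htau) !hr.
- by apply: (can_inj hl); rewrite hr (tau_one htau).
- by exists tau.
- move=> h M f hf.
  have hf' : bilin (fun a b => f (tauinv a) (tauinv b)).
    by split=> s x y z; rewrite inv_linear ?hf.1 ?hf.2.
  have := tau_D htau (tauinv h) hf'; rewrite hr !big_map /= => ->.
  by apply: eq_bigr => p _; rewrite !hl.
- by move=> h; rewrite -{2}[h]hr (tau_eps htau).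
Qed.

Lemma inv_is_order m : is_order tau m -> is_order tauinv m.
Proof.
case=> m0 [hm hj]; split=> //; split.
  by move=> h; apply: (can_inj (iter_can m hl)); rewrite (iter_can m hr) hm.
move=> j hj0; have [h hh] := hj j hj0.
by exists (iter j tau h); rewrite (iter_can j hl) => e; apply: hh; rewrite -e.
Qed.

Lemma exp_cond_inv n : exp_cond D eps tau n -> exp_cond D eps tauinv n.
Proof.
case=> n0 [[m [om dvd]] htp]; split=> //; split.
  by exists m; split=> //; apply: inv_is_order.
apply: twisted_power_inv => // h; case/dvdnP: dvd => q ->.
by rewrite iterM iter_fix //; case: om => _ [].
Qed.

End Automorphism.

End HopfAlgebra.

Theorem corollary3p5 (k : fieldType) (H : algType k)
    (D : H -> seq (H * H)) (eps : H -> k) (S : H -> H)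
    (hH : is_hopf D eps S) (hS2 : forall h, S (S h) = h)
    (tau tauinv : H -> H) (htau : is_hopf_aut D eps tau)
    (hl : cancel tau tauinv) (hr : cancel tauinv tau)
    (hfin : exists m, is_order tau m) :
  forall n : nat, is_exp D eps tauinv n <-> is_exp D eps tau n.
Proof.
have cond_iff m : exp_cond D eps tauinv m <-> exp_cond D eps tau m.
  split; [exact: (exp_cond_inv hH (inv_is_hopf_aut htau hl hr) hS2 hr hl)
        | exact: (exp_cond_inv hH htau hS2 hl hr)].
move=> n; split=> [[hn hmin]|[hn hmin]]; split=> [|m hm /cond_iff];
  by [apply/cond_iff | apply: hmin].
Qed.
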